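(* Let $1 \leq k \leq n$, let $l, u \in \mathbb{R}^n$ with $l_i \leq u_i$ for all $i$, and let $x \in \mathbb{R}^n$ satisfy $l_i \leq x_i \leq u_i$ for all $i$. Put $L = Q_k(l)$. Then for every subset $W \subseteq \{1, \ldots, n\}$ with $|W| \geq k$ and every real $U > L$, $$Q_k(x) \geq L + \frac{U - L}{|W| - k + 1}\left(\sum_{i \in W} \frac{x_i - L}{\max(U, u_i) - L} - k + 1\right).$$
   Context: For $y \in \mathbb{R}^n$ and an integer $1 \leq k \leq n$, $Q_k(y)$ denotes the $k$-th largest entry of $y$ (entries counted with multiplicity). *)

From HB Require Import structures.
From mathcomp Require Import all_boot all_order all_algebra.
Set Implicit Arguments. Unset Strict Implicit. Unset Printing Implicit Defensive.
Import Order.TTheory GRing.Theory Num.Theory.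
Local Open Scope ring_scope.

(* Q_k(y): the k-th largest entry of y (1-based, with multiplicity):
   sort the entries in nonincreasing order and take the entry at
   position k (index k-1). Vectors of R^n are functions 'I_n -> R. *)
Definition Qk (R : realDomainType) (n : nat) (k : nat) (y : 'I_n -> R) : R :=
  nth 0 (sort (fun a b : R => b <= a) [seq y i | i <- enum 'I_n]) k.-1.

(* Let q = Q_k(x), so L <= q by monotonicity of Q_k, and r = min(1, (q - L)/(U - L)).
   Every ratio t_i = (x_i - L)/(max(U, u_i) - L) is at most 1, and at most r
   when x_i <= q; since fewer than k entries of x exceed q, the sum over W
   satisfies sum t_i - k + 1 <= r (|W| - k + 1).  Scaling by (U - L)/(|W| - k + 1)
   gives a correction of at most (U - L) r <= q - L. *)

From HB Require Import structures.
From mathcomp Require Import all_boot all_order all_algebra.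
From mathcomp Require Import zify lra.
Import Order.TTheory GRing.Theory Num.Theory.

Set Implicit Arguments.
Unset Strict Implicit.
Unset Printing Implicit Defensive.

Local Open Scope ring_scope.

Section OrderStatistic.
Variables (R : realDomainType) (n : nat) (y : 'I_n -> R).

Let s := sort (fun a b : R => b <= a) [seq y i | i <- enum 'I_n].

Let size_s : size s = n.
Proof. by rewrite size_sort size_map size_enum_ord. Qed.

Let s_nth_le j1 j2 : (j1 <= j2 < n)%N -> nth 0 s j2 <= nth 0 s j1.
Proof.
case/andP=> le_j12 lt_j2n.
apply: (sorted_leq_nth (leT := fun a b : R => b <= a)) => //.
- by move=> a b c /= le_ab le_ca; apply: le_trans le_ca le_ab.
- by apply: sort_sorted => a b; apply: le_total.
- by rewrite inE size_s (leq_ltn_trans le_j12).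
- by rewrite inE size_s.
Qed.

Let card_set_count (P : pred R) : #|[set i | P (y i)]| = count P s.
Proof.
have /permP -> : perm_eq s [seq y i | i <- enum 'I_n] by rewrite perm_sort.
rewrite cardsE cardE /enum_mem size_filter count_map.
by rewrite -enumT (eq_filter (a2 := predT)) // filter_predT; apply: eq_count.
Qed.

Lemma card_ge_Qk k : (k <= n)%N -> (k <= #|[set i | (Qk k y <= y i)%R]|)%N.
Proof.
move=> le_kn; rewrite card_set_count -(cat_take_drop k s) count_cat.
suff : count (fun v => Qk k y <= v) (take k s) = size (take k s).
  by rewrite size_takel ?size_s // => ->; apply: leq_addr.
apply/eqP; rewrite -all_count; apply/(all_nthP 0) => j.
rewrite size_takel ?size_s // => lt_jk.
by rewrite nth_take // s_nth_le //; lia.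
Qed.

Lemma card_gt_Qk k : (#|[set i | (Qk k y < y i)%R]| <= k.-1)%N.
Proof.
rewrite card_set_count -(cat_take_drop k.-1 s) count_cat.
have -> : count (fun v => Qk k y < v) (drop k.-1 s) = 0%N.
  apply/eqP; rewrite -leqn0 leqNgt -has_count; apply/(has_nthP 0) => -[j].
  rewrite size_drop size_s nth_drop => lt_j /=.
  by rewrite ltNge s_nth_le //; lia.
by rewrite addn0 (leq_trans (count_size _ _)) // size_take; case: ltnP.
Qed.

End OrderStatistic.

Lemma le_Qk (R : realDomainType) n k (y z : 'I_n -> R) :
  (1 <= k <= n)%N -> (forall i, y i <= z i) -> Qk k y <= Qk k z.
Proof.
case/andP=> k_gt0 le_kn le_yz; rewrite leNgt; apply/negP => lt_zy.
have : (#|[set i | (Qk k y <= y i)%R]| <= #|[set i | (Qk k z < z i)%R]|)%N.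
  apply/subset_leq_card/subsetP => i; rewrite !inE => le_yi.
  exact: lt_le_trans lt_zy (le_trans le_yi (le_yz i)).
have := card_ge_Qk y le_kn; have := card_gt_Qk z k; lia.
Qed.

Lemma ler_sum_few_exceptions (R : realDomainType) (I : finType)
    (W A : {set I}) (t : I -> R) (r : R) (k : nat) :
  r <= 1 -> (#|W :&: A| < k)%N ->
  {in W, forall i, t i <= 1} -> {in W :\: A, forall i, t i <= r} ->
  \sum_(i in W) t i - k%:R + 1 <= r * (#|W|%:R - k%:R + 1).
Proof.
move=> le_r1 lt_Ak le_t1 le_tr.
rewrite (big_setID A) /= -(cardsID A W) natrD.
have sumA : \sum_(i in W :&: A) t i <= #|W :&: A|%:R.
  rewrite -sumr_const; apply: ler_sum => i /setIP[Wi _]; exact: le_t1.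
have sumWA : \sum_(i in W :\: A) t i <= #|W :\: A|%:R * r.
  by rewrite mulr_natl -sumr_const; apply: ler_sum.
have : (#|W :&: A|.+1%:R <= k%:R :> R) by rewrite ler_nat.
rewrite -addn1 natrD.
set cA := #|W :&: A|%:R in sumA *; set cWA := #|W :\: A|%:R in sumWA * => le_cAk.
have slack : 0 <= (1 - r) * (k%:R - 1 - cA) by apply: mulr_ge0; lra.
nra.
Qed.

Section GapRatio.
Variables (R : realFieldType) (L U : R).
Hypothesis lt_LU : L < U.

Lemma gap_ratio_le1 M a : U <= M -> a <= M -> (a - L) / (M - L) <= 1.
Proof.
move=> le_UM le_aM; have lt0ML : 0 < M - L by rewrite subr_gt0 (lt_le_trans lt_LU).
by rewrite ler_pdivrMr // mul1r lerD2r.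
Qed.

Lemma gap_ratio_le M a q :
  U <= M -> a <= q -> L <= q -> (a - L) / (M - L) <= (q - L) / (U - L).
Proof.
move=> le_UM le_aq le_Lq.
have lt0UL : 0 < U - L by rewrite subr_gt0.
have lt0ML : 0 < M - L by rewrite subr_gt0 (lt_le_trans lt_LU).
set c := (q - L) / (U - L).
have le0c : 0 <= c by apply: divr_ge0; lra.
have cUL : c * (U - L) = q - L by rewrite divfK ?lt0r_neq0.
rewrite ler_pdivrMr //; nra.
Qed.

End GapRatio.

Theorem theorem4 (R : realFieldType) (n k : nat) (l u x : 'I_n -> R)
  (hk1 : (1 <= k)%N) (hkn : (k <= n)%N)
  (hlu : forall i, l i <= u i)
  (hlx : forall i, l i <= x i) (hxu : forall i, x i <= u i)
  (W : {set 'I_n}) (hW : (k <= #|W|)%N) (U : R) (hU : Qk k l < U) :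
  Qk k l + (U - Qk k l) / ((#|W| - k + 1)%N)%:R
           * (\sum_(i in W) (x i - Qk k l) / (Num.max U (u i) - Qk k l)
              - k%:R + 1)
  <= Qk k x.
Proof.
set L := Qk k l; set q := Qk k x; set m := #|W|.
have le_Lq : L <= q by apply: le_Qk => //; rewrite hk1 hkn.
have lt0UL : 0 < U - L by rewrite subr_gt0.
have le_UM i : U <= Num.max U (u i) by rewrite le_max lexx.
have le_xM i : x i <= Num.max U (u i).
  by apply: le_trans (hxu i) _; rewrite le_max lexx orbT.
pose r := Num.min 1 ((q - L) / (U - L)).
have le_sum : \sum_(i in W) (x i - L) / (Num.max U (u i) - L) - k%:R + 1
              <= r * (m%:R - k%:R + 1).
  apply: (ler_sum_few_exceptions (A := [set i | q < x i])).
  - by rewrite ge_min lexx.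
  - apply: leq_ltn_trans (subset_leq_card (subsetIr _ _)) _.
    by apply: leq_ltn_trans (card_gt_Qk x k) _; rewrite ltn_predL.
  - by move=> i _; exact: (gap_ratio_le1 hU (le_UM i) (le_xM i)).
  - move=> i /setDP[_]; rewrite inE -leNgt => le_xq.
    rewrite le_min; apply/andP; split.
    + exact: (gap_ratio_le1 hU (le_UM i) (le_xM i)).
    + exact: (gap_ratio_le hU (le_UM i) le_xq le_Lq).
have le_rUL : (U - L) * r <= q - L.
  by rewrite mulrC -ler_pdivlMr // /r ge_min lexx orbT.
have N_eq : ((m - k + 1)%N)%:R = m%:R - k%:R + 1 :> R by rewrite natrD natrB.
have lt0N : 0 < m%:R - k%:R + 1 :> R by rewrite -N_eq ltr0n addn1.
rewrite N_eq -lerBrDl; apply: le_trans (ler_wpM2l _ le_sum) _.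
  by apply: divr_ge0; apply: ltW.
by rewrite [r * _]mulrC mulrA divfK ?lt0r_neq0.
Qed.
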